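(* Assume $|F|>2$. Then $E$ has an asymptotic sequence, i.e. there is a sequence $(A_n)_{n\in\omega}$ of pairwise disjoint asymptotic subsets of $E\setminus\{0\}$.
   Context: $F$ is a countable field and $E$ is a countably infinite-dimensional $F$-vector space. A set $A\subseteq E\setminus\{0\}$ is asymptotic if $V\cap A\neq\emptyset$ for every infinite-dimensional subspace $V$ of $E$. *)

From HB Require Import structures.
From mathcomp Require Import all_boot all_order all_algebra.
Set Implicit Arguments. Unset Strict Implicit. Unset Printing Implicit Defensive.
Import GRing.Theory.
Local Open Scope ring_scope.

Definition countable_type (T : Type) : Prop := exists f : T -> nat, injective f.

Section Defs.
Variables (F : fieldType) (E : lmodType F).

Definition lin_indep (n : nat) (v : 'I_n -> E) : Prop :=
  forall c : 'I_n -> F, \sum_(i < n) c i *: v i = 0 -> forall i, c i = 0.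

Definition is_subspace (V : E -> Prop) : Prop :=
  [/\ V 0, (forall x y, V x -> V y -> V (x + y)) & (forall (a : F) x, V x -> V (a *: x))].

Definition inf_dim (V : E -> Prop) : Prop :=
  forall n : nat, exists v : 'I_n -> E, (forall i, V (v i)) /\ lin_indep v.

Definition asymptotic (A : E -> Prop) : Prop :=
  (forall x, A x -> x <> 0) /\
  (forall V : E -> Prop, is_subspace V -> inf_dim V -> exists x, V x /\ A x).
End Defs.

From mathcomp Require Import all_boot all_order all_algebra.
From Stdlib Require Import Classical ClassicalEpsilon.
From mathcomp Require Import zify.
Set Implicit Arguments. Unset Strict Implicit. Unset Printing Implicit Defensive.
Import GRing.Theory.
Local Open Scope ring_scope.

(* Extract a basis from an enumeration of E, so that every vector has finitely
   supported coordinates, and let k(x) count the places where consecutive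
   nonzero coordinates of x differ; A_n is the set of x <> 0 such that k(x) + 1
   has 2-adic valuation n.  An infinite-dimensional subspace V contains nonzero
   vectors whose coordinates vanish below any given index.  Appending such a
   vector to x, scaled so that its first nonzero coordinate equals either the
   last one of x or a times it (a <> 0, 1), adds to k exactly k(w) or k(w) + 1.
   Hence k takes arbitrarily long runs of consecutive values on V, and any
   2^(n+1) consecutive integers contain one of valuation n. *)

Fixpoint changes (T : eqType) (s : seq T) : nat :=
  if s is a :: ((b :: _) as t) then ((a != b) + changes t)%N else 0%N.

Lemma changes_cons2 (T : eqType) (a b : T) s :
  changes (a :: b :: s) = ((a != b) + changes (b :: s))%N.
Proof. by []. Qed.

Lemma changes_cat (T : eqType) (a b : T) s t :
  changes (a :: s ++ b :: t) = (changes (a :: s) + (last a s != b) + changes (b :: t))%N.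
Proof.
elim: s a => [|a' s IH] a //.
by rewrite cat_cons !changes_cons2 IH /= !addnA.
Qed.

Lemma changes_map (T : eqType) (f : T -> T) s : injective f -> changes (map f s) = changes s.
Proof.
move=> f_inj; elim: s => [|a [|b s] IH] //=.
by move: IH => /= ->; rewrite (inj_eq f_inj).
Qed.

Lemma logn2_window k n : exists2 r, (r < 2 ^ n.+1)%N & logn 2 (k + r) = n.
Proof.
have logn_odd q : logn 2 (2 ^ n * q.*2.+1) = n.
  by rewrite mulnC logn_Gauss ?pfactorK // coprime2n /= odd_double.
rewrite expnSr; have : (0 < 2 ^ n)%N by rewrite expn_gt0.
move: (2 ^ n)%N logn_odd => P logn_odd P_gt0.
have b_lt : (k %% (P * 2) < P * 2)%N by rewrite ltn_pmod // muln_gt0 P_gt0.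
rewrite (divn_eq k (P * 2)).
move: (k %/ (P * 2))%N (k %% (P * 2))%N b_lt => q b b_lt.
have [b_le | b_gt] := leqP b P.
- by exists (P - b)%N; [lia | rewrite -(logn_odd q); congr logn; rewrite -!muln2; nia].
- by exists (P * 3 - b)%N; [lia | rewrite -(logn_odd q.+1); congr logn; rewrite -!muln2; nia].
Qed.

Definition supported_below (R : nmodType) (N : nat) (h : nat -> R) :=
  forall i, (N <= i)%N -> h i = 0.

Lemma supported_below_widen (R : nmodType) N N' (h : nat -> R) :
  (N <= N')%N -> supported_below N h -> supported_below N' h.
Proof. by move=> le_NN' suppN i le_N'i; apply/suppN/(leq_trans le_NN'). Qed.

Section NonzeroValues.
Variable R : nmodType.
Implicit Types (h : nat -> R) (s : seq nat).

Definition nonzero_values h s : seq R := [seq h i | i <- s & h i != 0].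

Lemma nonzero_values_cat h s1 s2 :
  nonzero_values h (s1 ++ s2) = nonzero_values h s1 ++ nonzero_values h s2.
Proof. by rewrite /nonzero_values filter_cat map_cat. Qed.

Lemma eq_in_nonzero_values h h' s :
  {in s, h =1 h'} -> nonzero_values h s = nonzero_values h' s.
Proof.
move=> eq_hh'; rewrite /nonzero_values (@eq_in_filter _ _ (fun i => h' i != 0)).
  by apply/eq_in_map => i; rewrite mem_filter => /andP[_ /eq_hh'].
by move=> i /eq_hh' ->.
Qed.

Lemma nonzero_values_nil h s : {in s, forall i, h i = 0} -> nonzero_values h s = [::].
Proof.
move=> h0; rewrite /nonzero_values (@eq_in_filter _ _ pred0) ?filter_pred0 //.
by move=> i /h0 ->; rewrite eqxx.
Qed.

Lemma nonzero_values_neq0 h s : all (fun a => a != 0) (nonzero_values h s).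
Proof. by rewrite all_map; apply/allP => i; rewrite mem_filter => /andP[]. Qed.

Lemma nonzero_values_iota h N N' : supported_below N h -> supported_below N' h ->
  nonzero_values h (iota 0 N) = nonzero_values h (iota 0 N').
Proof.
wlog le_NN' : N N' / (N <= N')%N => [wlog_le|suppN _].
  by case: (leqP N N') => [|/ltnW] le; [|symmetry]; apply: wlog_le.
rewrite -(subnKC le_NN') iotaD nonzero_values_cat.
rewrite [in X in _ ++ X]nonzero_values_nil ?cats0 //.
by move=> i; rewrite mem_iota => /andP[/suppN].
Qed.

End NonzeroValues.

Lemma nonzero_valuesZ (R : pzRingType) (mu : R) (h : nat -> R) (s : seq nat) :
  GRing.lreg mu -> nonzero_values (fun i => mu * h i) s = map ( *%R mu) (nonzero_values h s).
Proof.
move=> mu_reg; rewrite /nonzero_values -map_comp.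
by congr map; apply: eq_filter => i; rewrite /= (mulrI_eq0 _ mu_reg).
Qed.

Lemma subspace_sum (F : fieldType) (E : lmodType F) (V : E -> Prop) n
    (d : 'I_n -> F) (v : 'I_n -> E) :
  is_subspace V -> (forall j, V (v j)) -> V (\sum_(j < n) d j *: v j).
Proof. by case=> V0 VD VZ Vv; apply: big_ind => // j _; apply: VZ. Qed.

Section CoordinateChanges.
Variables (F : fieldType) (E : lmodType F) (coord : E -> nat -> F).
Hypothesis coord_lin : forall a x y i, coord (a *: x + y) i = a * coord x i + coord y i.
Hypothesis coord_eq0 : forall x, (forall i, coord x i = 0) -> x = 0.
Hypothesis coord_supported : forall x, exists N, supported_below N (coord x).

Lemma coord0 i : coord 0 i = 0.
Proof. by rewrite -{1}(addNr (0 : E)) -scaleN1r coord_lin mulN1r addNr. Qed.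

Lemma coordDZ x mu w i : coord (x + mu *: w) i = coord x i + mu * coord w i.
Proof. by rewrite addrC coord_lin addrC. Qed.

Lemma coord_sum n (d : 'I_n -> F) (v : 'I_n -> E) i :
  coord (\sum_(j < n) d j *: v j) i = \sum_(j < n) d j * coord (v j) i.
Proof.
apply: (big_rec2 (fun y a => coord y i = a)) => [|j y a _ <-]; first exact: coord0.
by rewrite coord_lin.
Qed.

Definition coord_values N x := nonzero_values (coord x) (iota 0 N).

Lemma coord_values0 N : coord_values N 0 = [::].
Proof. by apply: nonzero_values_nil => i _; apply: coord0. Qed.

Lemma coord_values_neq_nil N x :
  x <> 0 -> supported_below N (coord x) -> coord_values N x <> [::].
Proof.
move=> x_neq0 suppx values_nil; apply/x_neq0/coord_eq0 => i.
have [/suppx //|lt_iN] := leqP N i.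
apply/eqP; apply: contraT => xi_neq0.
have : coord x i \in coord_values N x by rewrite map_f // mem_filter xi_neq0 mem_iota.
by rewrite values_nil.
Qed.

Lemma coord_values_glue M N x w mu :
  supported_below M (coord x) -> (forall i, (i < M)%N -> coord w i = 0) ->
  (M <= N)%N -> mu != 0 ->
  coord_values N (x + mu *: w) = coord_values M x ++ map ( *%R mu) (coord_values N w).
Proof.
move=> suppx w_low le_MN mu_neq0.
rewrite /coord_values -(subnKC le_MN) iotaD !nonzero_values_cat.
rewrite [nonzero_values (coord w) _]nonzero_values_nil /=; last first.
  by move=> i; rewrite mem_iota => /andP[_ /w_low].
rewrite -nonzero_valuesZ; last exact: mulfI.
congr (_ ++ _); apply: eq_in_nonzero_values => i; rewrite mem_iota coordDZ.
  by case/andP=> _ /w_low ->; rewrite mulr0 addr0.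
by case/andP=> /suppx -> _; rewrite add0r.
Qed.

Lemma changes_glue M N x w (e : F) :
  x <> 0 -> supported_below M (coord x) ->
  w <> 0 -> (forall i, (i < M)%N -> coord w i = 0) -> supported_below N (coord w) ->
  (M <= N)%N -> e != 0 ->
  exists2 mu, x + mu *: w <> 0 &
    changes (coord_values N (x + mu *: w)) =
    (changes (coord_values M x) + (e != 1%R) + changes (coord_values N w))%N.
Proof.
move=> x_neq0 suppx w_neq0 w_low suppw le_MN e_neq0.
have := coord_values_neq_nil x_neq0 suppx; case Lx: (coord_values M x) => [//|a s] _.
have := coord_values_neq_nil w_neq0 suppw; case Lw: (coord_values N w) => [//|b t] _.
have /allP Lx_neq0 : all (fun c => c != 0) (a :: s) by rewrite -Lx nonzero_values_neq0.
have /allP Lw_neq0 : all (fun c => c != 0) (b :: t) by rewrite -Lw nonzero_values_neq0.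
have l_neq0 : last a s != 0 by apply/Lx_neq0/mem_last.
have b_neq0 : b != 0 by apply/Lw_neq0/mem_head.
(* chosen so that the two blocks meet in [last a s, e * last a s] *)
pose mu := e * last a s / b.
have mu_neq0 : mu != 0 by rewrite !mulf_neq0 ?invr_eq0.
have glue := coord_values_glue suppx w_low le_MN mu_neq0.
exists mu.
  by move=> y0; move: glue; rewrite y0 coord_values0 Lx.
rewrite glue Lx Lw map_cons changes_cat -map_cons (changes_map _ (mulfI mu_neq0)).
by rewrite divfK // -{1}[last a s]mul1r (inj_eq (mulIf l_neq0)) eq_sym.
Qed.

Lemma subspace_vanishing_below V : is_subspace V -> inf_dim V ->
  forall N, exists w, [/\ V w, w <> 0 & forall i, (i < N)%N -> coord w i = 0].
Proof.
move=> Vsub Vinf N; have [v [Vv v_indep]] := Vinf N.+1.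
pose A : 'M[F]_(N.+1, N) := \matrix_(j, i) coord (v j) i.
pose u := nz_row (kermx A).
have u_neq0 : u != 0.
  rewrite nz_row_eq0 kermx_eq0; apply/negP => /eqP rankA.
  by have := rank_leq_col A; rewrite rankA ltnn.
have uA0 : u *m A = 0 by apply/sub_kermxP/nz_row_sub.
exists (\sum_(j < N.+1) u 0 j *: v j); split; first exact: subspace_sum.
  move=> w0; move/eqP: u_neq0; apply; apply/rowP => j.
  by rewrite mxE (v_indep _ w0).
move=> i lt_iN; rewrite coord_sum.
transitivity ((u *m A) 0 (Ordinal lt_iN)); last by rewrite uA0 mxE.
by rewrite mxE; apply: eq_bigr => j _; rewrite mxE.
Qed.

Lemma changes_consecutive V (a0 : F) :
  is_subspace V -> inf_dim V -> a0 != 0 -> a0 != 1 ->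
  forall m, exists S M, forall r, (r <= m)%N -> exists x,
    [/\ V x, x <> 0, supported_below M (coord x) & changes (coord_values M x) = (S + r)%N].
Proof.
move=> Vsub Vinf a0_neq0 a0_neq1; have [_ VD VZ] := Vsub.
elim=> [|m [S [M IH]]].
  have [w [Vw w_neq0 _]] := subspace_vanishing_below Vsub Vinf 0.
  have [N suppw] := coord_supported w.
  exists (changes (coord_values N w)), N => r; rewrite leqn0 => /eqP ->.
  by exists w; rewrite addn0.
have [w [Vw w_neq0 w_low]] := subspace_vanishing_below Vsub Vinf M.
have [N0 suppw0] := coord_supported w; set N := maxn M N0.
have suppw : supported_below N (coord w).
  exact: supported_below_widen (leq_maxr M N0) suppw0.
have extend r (e : F) : (r <= m)%N -> e != 0 -> exists y,
    [/\ V y, y <> 0, supported_below N (coord y) &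
        changes (coord_values N y) = (S + r + (e != 1%R) + changes (coord_values N w))%N].
  move=> le_rm e_neq0; have [x [Vx x_neq0 suppx <-]] := IH r le_rm.
  have [mu y_neq0 changes_y] :=
    changes_glue x_neq0 suppx w_neq0 w_low suppw (leq_maxl M N0) e_neq0.
  exists (x + mu *: w); split => //; first by apply: VD => //; apply: VZ.
  move=> i le_Ni; rewrite coordDZ suppw // mulr0 addr0.
  by apply: (supported_below_widen (leq_maxl M N0) suppx).
exists (S + changes (coord_values N w))%N, N => r; rewrite leq_eqVlt ltnS.
case/orP=> [/eqP -> | le_rm].
  have [y [Vy y_neq0 suppy changes_y]] := extend m a0 (leqnn m) a0_neq0.
  by exists y; split => //; rewrite changes_y a0_neq1; lia.
have [y [Vy y_neq0 suppy changes_y]] := extend r 1 le_rm (oner_neq0 F).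
by exists y; split => //; rewrite changes_y eqxx; lia.
Qed.

Definition change_class n x :=
  x <> 0 /\ exists2 N, supported_below N (coord x) &
    logn 2 (changes (coord_values N x)).+1 = n.

Lemma change_class_asymptotic (a0 : F) : a0 != 0 -> a0 != 1 ->
  forall n, asymptotic (change_class n).
Proof.
move=> a0_neq0 a0_neq1 n; split=> [x [] //|V Vsub Vinf].
have [S [M window]] := changes_consecutive Vsub Vinf a0_neq0 a0_neq1 (2 ^ n.+1).-1.
have [r lt_r log_r] := logn2_window S.+1 n.
have [|x [Vx x_neq0 suppx changes_x]] := window r; first by rewrite -ltnS prednK ?expn_gt0.
by exists x; split=> //; split=> //; exists M; rewrite // changes_x -addSn.
Qed.

Lemma change_class_disjoint m n x : change_class m x -> change_class n x -> m = n.
Proof.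
move=> [_ [N1 supp1 <-]] [_ [N2 supp2 <-]].
by rewrite /coord_values (nonzero_values_iota supp1 supp2).
Qed.

End CoordinateChanges.

Section EnumerationCoordinates.
Variables (F : fieldType) (E : lmodType F) (g : nat -> E).

Definition prefix_dependent i := exists a : nat -> F, g i = \sum_(j < i) a j *: g j.

(* [h] is the coordinate vector of [x] in the basis formed by the [g i] that are
   not spanned by their predecessors. *)
Definition coords_of (h : nat -> F) (x : E) :=
  (forall i, prefix_dependent i -> h i = 0) /\
  exists2 N, supported_below N h & x = \sum_(i < N) h i *: g i.

Lemma sum_supported_below h N N' : supported_below N h -> supported_below N' h ->
  \sum_(i < N) h i *: g i = \sum_(i < N') h i *: g i.
Proof.
wlog le_NN' : N N' / (N <= N')%N => [wlog_le|suppN _].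
  by case: (leqP N N') => [|/ltnW] le; [|symmetry]; apply: wlog_le.
rewrite (big_ord_widen N' (fun i => h i *: g i) le_NN') big_mkcond /=.
apply: eq_bigr => i _; case: ifP => // /negbT; rewrite -leqNgt => /suppN ->.
by rewrite scale0r.
Qed.

Lemma coords_of_sum h x N : coords_of h x -> supported_below N h ->
  x = \sum_(i < N) h i *: g i.
Proof. by move=> [_ [N' suppN' ->]] /(sum_supported_below suppN'). Qed.

Lemma coords_of_zero : coords_of (fun _ => 0) 0.
Proof. by split=> //; exists 0%N; rewrite ?big_ord0. Qed.

Lemma coords_of_lin a h x h' y : coords_of h x -> coords_of h' y ->
  coords_of (fun i => a * h i + h' i) (a *: x + y).
Proof.
move=> cx cy; have [hdep [N suppN _]] := cx; have [h'dep [N' suppN' _]] := cy.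
split=> [i dep_i|]; first by rewrite hdep // h'dep // mulr0 addr0.
have le_N := leq_maxl N N'; have le_N' := leq_maxr N N'.
exists (maxn N N').
  move=> i le_i; rewrite (supported_below_widen le_N suppN) //.
  by rewrite (supported_below_widen le_N' suppN') // mulr0 addr0.
rewrite (coords_of_sum cx (supported_below_widen le_N suppN)).
rewrite (coords_of_sum cy (supported_below_widen le_N' suppN')).
by rewrite scaler_sumr -big_split; apply: eq_bigr => i _; rewrite scalerDl scalerA.
Qed.

Lemma coords_of0 d : coords_of d 0 -> forall i, d i = 0.
Proof.
case=> d_dep [N]; elim: N => [|N IH] suppN sum0; first by move=> i; apply: suppN.
have [dN0|dN_neq0] := eqVneq (d N) 0.
  apply: IH; last by move: sum0; rewrite big_ord_recr /= dN0 scale0r addr0.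
  by move=> i; rewrite leq_eqVlt => /orP[/eqP <- | /suppN].
have dep_N : prefix_dependent N.
  exists (fun j => - (d N)^-1 * d j).
  move/eqP: sum0; rewrite big_ord_recr /= eq_sym addrC addr_eq0 => /eqP gN.
  rewrite -[g N]scale1r -(mulVf dN_neq0) -scalerA gN scalerN scaler_sumr -sumrN.
  by apply: eq_bigr => j _; rewrite scalerA mulNr scaleNr.
by case/eqP: dN_neq0; apply: d_dep.
Qed.

Lemma coords_of_unique h h' x : coords_of h x -> coords_of h' x -> h =1 h'.
Proof.
move=> cx cx' i; apply/eqP; rewrite eq_sym -subr_eq0 addrC -mulN1r.
by have := coords_of_lin (-1) cx cx'; rewrite scaleN1r addNr => /coords_of0 ->.
Qed.

Hypothesis g_surj : forall x, exists m, g m = x.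

Lemma coords_of_exists x : exists h, coords_of h x.
Proof.
have [m <-] := g_surj x; elim/ltn_ind: m => m IH.
have [[a ->]|indep_m] := classic (prefix_dependent m).
  apply: (big_ind (fun y => exists h, coords_of h y)) => [|y z [hy cy] [hz cz]|j _].
  - by exists (fun _ => 0); apply: coords_of_zero.
  - by exists (fun i => 1 * hy i + hz i); rewrite -[y]scale1r; apply: coords_of_lin.
  - have [h ch] := IH j (ltn_ord j); exists (fun i => a j * h i + 0).
    by rewrite -[_ *: g j]addr0; apply: coords_of_lin ch coords_of_zero.
exists (fun i => (i == m)%:R); split=> [i dep_i|].
  by case: eqP => // eq_im; case: indep_m; rewrite -eq_im.
exists m.+1 => [i /gtn_eqF -> //|].
rewrite big_ord_recr /= eqxx scale1r big1 ?add0r // => i _.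
by rewrite (ltn_eqF (ltn_ord i)) scale0r.
Qed.

Definition enum_coord (x : E) : nat -> F :=
  epsilon (inhabits (fun _ => 0)) (fun h => coords_of h x).

Lemma enum_coord_spec x : coords_of (enum_coord x) x.
Proof. exact: epsilon_spec (coords_of_exists x). Qed.

Lemma enum_coord_lin a x y i :
  enum_coord (a *: x + y) i = a * enum_coord x i + enum_coord y i.
Proof.
have cxy := coords_of_lin a (enum_coord_spec x) (enum_coord_spec y).
exact: coords_of_unique (enum_coord_spec _) cxy i.
Qed.

Lemma enum_coord_eq0 x : (forall i, enum_coord x i = 0) -> x = 0.
Proof. by move=> x0; rewrite (coords_of_sum (enum_coord_spec x) (N := 0)) ?big_ord0. Qed.

Lemma enum_coord_supported x : exists N, supported_below N (enum_coord x).
Proof. by have [_ [N suppN _]] := enum_coord_spec x; exists N. Qed.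

End EnumerationCoordinates.

Lemma countable_enumeration (T : Type) (t0 : T) :
  countable_type T -> exists g : nat -> T, forall x, exists n, g n = x.
Proof.
case=> f f_inj; exists (fun n => epsilon (inhabits t0) (fun x => f x = n)) => x.
exists (f x); apply: f_inj.
by apply: (epsilon_spec (inhabits t0) (fun y => f y = f x)); exists x.
Qed.

Theorem lemma8p4 (F : fieldType) (E : lmodType F)
  (cntF : countable_type F) (cntE : countable_type E)
  (dimE : inf_dim (fun _ : E => True))
  (F_gt2 : exists a : F, a != 0 /\ a != 1) :
  exists A : nat -> E -> Prop,
    (forall n, asymptotic (A n)) /\
    (forall m n (x : E), m <> n -> A m x -> A n x -> False).
Proof.
have [g g_surj] := countable_enumeration 0 cntE.
have [a0 [a0_neq0 a0_neq1]] := F_gt2.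
exists (change_class (enum_coord g)); split=> [n | m n x neq_mn Am An].
  exact: (change_class_asymptotic (enum_coord_lin g_surj) (enum_coord_eq0 g_surj)
            (enum_coord_supported g_surj) a0_neq0 a0_neq1).
exact/neq_mn/(change_class_disjoint Am An).
Qed.
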